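(* The Top-$t$ Truncated Harmonic rule has metric distortion $O(m/t)$ (indeed at most $21m/t$).
   Context: Setting: $n$ agents, $m$ alternatives, $1\le t\le m$; each agent has an underlying strict ranking but only her ordered top-$t$ list is reported (top-$t$ profile $\vec\sigma_t$); $r_i(Y)\in\{1,\dots,t\}$ is the reported rank of $Y$ when $Y$ is among $i$'s top $t$; $H_t=\sum_{k=1}^t1/k$. For the reported information, $Y\succ_i\hat X$ holds when $Y$ is among $i$'s top $t$ and either $\hat X$ is not among them or $r_i(Y)<r_i(\hat X)$. Metric framework: a pseudometric $d$ on agents and alternatives is consistent with $\vec\sigma_t$ if for some full ranking profile whose top-$t$ prefixes agree with $\vec\sigma_t$, $X\succ_iY\Rightarrow d(i,X)\le d(i,Y)$. $\mathrm{SC}(X,d)=\sum_id(i,X)$; metric distortion of $f$: $\sup_{\vec\sigma_t}\sup_d\mathbb E_{X\sim f(\vec\sigma_t)}[\mathrm{SC}(X,d)]/\min_X\mathrm{SC}(X,d)$. Top-$t$ Truncated Harmonic rule: fix a deterministic voting rule $g$ on top-$t$ profiles with metric distortion at most $6m/t+1$ (such a rule exists), and let $\hat X=g(\vec\sigma_t)$. Pick an agent $i$ uniformly at random and output $Y$ with probability $p(i,Y)=\frac{1}{2H_t r_i(Y)}$ if $Y\succ_i\hat X$, $p(i,\hat X)=1-\sum_{Y\succ_i\hat X}p(i,Y)$, and $p(i,Y)=0$ otherwise. *)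

From HB Require Import structures.
From mathcomp Require Import all_boot all_order all_algebra.
From mathcomp Require Import reals.
Set Implicit Arguments. Unset Strict Implicit. Unset Printing Implicit Defensive.
Import Order.TTheory GRing.Theory Num.Theory.
Local Open Scope ring_scope.

(* Agents are 'I_n, alternatives are 'I_m.  A top-t profile assigns to each
   agent i an injective list (sigma i : 'I_t -> 'I_m); sigma i k is the
   alternative reported at position k (reported rank k+1). *)
Record topt_profile (n m t : nat) := TopT {
  tp :> 'I_n -> 'I_t -> 'I_m;
  tp_inj : forall i, injective (tp i) }.

Definition pseudometric (R : realType) (n m : nat)
    (d : 'I_n + 'I_m -> 'I_n + 'I_m -> R) : Prop :=
  [/\ forall x, d x x = 0,
      forall x y, 0 <= d x y,
      forall x y, d x y = d y x &
      forall x y z, d x z <= d x y + d y z].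

(* d is consistent with sigma: some full ranking profile pi (pi i a = the
   alternative at position a in agent i's full ranking) extends sigma and
   positions earlier are weakly closer. *)
Definition consistent (R : realType) (n m t : nat) (sigma : topt_profile n m t)
    (d : 'I_n + 'I_m -> 'I_n + 'I_m -> R) : Prop :=
  exists pi : 'I_n -> 'I_m -> 'I_m,
    [/\ forall i, injective (pi i),
        forall i (k : 'I_t) (a : 'I_m), val a = val k -> pi i a = sigma i k &
        forall i (a b : 'I_m), (a < b)%N ->
          d (inl i) (inr (pi i a)) <= d (inl i) (inr (pi i b))].

Definition SC (R : realType) (n m : nat)
    (d : 'I_n + 'I_m -> 'I_n + 'I_m -> R) (X : 'I_m) : R :=
  \sum_(i < n) d (inl i) (inr X).

(* Reported rank r_i(Y) in {1..t}, or 0 if Y is not among i's top t. *)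
Definition rnk (n m t : nat) (sigma : topt_profile n m t) (i : 'I_n) (Y : 'I_m)
    : nat :=
  match [pick k | sigma i k == Y] with Some k => (val k).+1 | None => 0%N end.

Definition prefers (n m t : nat) (sigma : topt_profile n m t) (i : 'I_n)
    (Y X : 'I_m) : bool :=
  [exists k : 'I_t, (sigma i k == Y) &&
     [forall k' : 'I_t, (sigma i k' == X) ==> (k < k')%N]].

Definition harmonic (R : realType) (t : nat) : R :=
  \sum_(k < t) ((k.+1)%:R)^-1.

Definition th_prob (R : realType) (n m t : nat) (sigma : topt_profile n m t)
    (Xh : 'I_m) (i : 'I_n) (Y : 'I_m) : R :=
  let q := fun Z : 'I_m => (2 * harmonic R t * (rnk sigma i Z)%:R)^-1 in
  if Y == Xh then 1 - \sum_(Z < m | prefers sigma i Z Xh) q Z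
  else if prefers sigma i Y Xh then q Y else 0.

Definition th_expected_SC (R : realType) (n m t : nat)
    (g : topt_profile n m t -> 'I_m) (sigma : topt_profile n m t)
    (d : 'I_n + 'I_m -> 'I_n + 'I_m -> R) : R :=
  (n%:R)^-1 * \sum_(i < n) \sum_(Y < m) th_prob R sigma (g sigma) i Y * SC d Y.

From HB Require Import structures.
From mathcomp Require Import all_boot all_order all_algebra.
From mathcomp Require Import reals.
From mathcomp Require Import ring lra.
Set Implicit Arguments. Unset Strict Implicit. Unset Printing Implicit Defensive.
Import Order.TTheory GRing.Theory Num.Theory.
Local Open Scope ring_scope.

(* Write Xh = g(sigma) and q(i,Y) = 1/(2 H_t r_i(Y)).
   1. For every agent i the deviation mass  S_i = sum_{Y >_i Xh} q(i,Y)  is at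
      most 1/2, because the reported ranks of distinct alternatives are
      distinct, so  sum_{Y >_i Xh} 1/r_i(Y) <= H_t.
   2. If Y >_i Xh then, by consistency, d(i,Y) <= d(i,Xh); the triangle
      inequality gives d(Xh,Y) <= 2 d(i,Xh) and hence
      SC(Y) <= SC(Xh) + 2 n d(i,Xh).
   3. Conditioned on agent i, the rule outputs Xh with probability 1 - S_i and
      such a Y otherwise, so its expected cost is at most
      SC(Xh) + 2 S_i n d(i,Xh) <= SC(Xh) + n d(i,Xh).
   4. Averaging over i gives  E[SC] <= 2 SC(Xh) <= 2 (6m/t + 1) SC(X),
      which is at most 21 m/t SC(X) since m/t >= 1.
   The file proves these steps in this order: pseudometric facts, the rank
   bookkeeping of step 1, the per-agent bound of steps 2-3, then the theorem. *)

Section Pseudometric.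
Variables (R : realType) (n m : nat) (d : 'I_n + 'I_m -> 'I_n + 'I_m -> R).
Hypothesis hd : pseudometric d.

Lemma SC_ge0 (X : 'I_m) : 0 <= SC d X.
Proof. by case: hd => _ dge _ _; apply: sumr_ge0 => j _; apply: dge. Qed.

Lemma SC_le_shift (X Y : 'I_m) : SC d Y <= SC d X + n%:R * d (inr X) (inr Y).
Proof.
case: hd => _ _ _ dtri.
apply: (@le_trans _ _ (\sum_(j < n) (d (inl j) (inr X) + d (inr X) (inr Y)))).
  by apply: ler_sum => j _; apply: dtri.
by rewrite big_split /= sumr_const card_ord mulr_natl.
Qed.

Lemma SC_le_closer (i : 'I_n) (X Y : 'I_m) :
  d (inl i) (inr Y) <= d (inl i) (inr X) ->
  SC d Y <= SC d X + 2 * (n%:R * d (inl i) (inr X)).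
Proof.
move=> hYX; case: hd => _ _ dsym dtri.
have hXY : d (inr X) (inr Y) <= 2 * d (inl i) (inr X).
  have := dtri (inr X) (inl i) (inr Y); rewrite (dsym (inr X) (inl i)); lra.
apply: le_trans (SC_le_shift X Y) _; rewrite lerD2l mulrCA.
by apply: ler_wpM2l; first exact: ler0n.
Qed.

End Pseudometric.

Section Ranks.
Variables (n m t : nat) (sigma : topt_profile n m t).

Lemma prefers_irrefl (i : 'I_n) (X : 'I_m) : ~~ prefers sigma i X X.
Proof.
apply/negP => /existsP [k /andP [hk /forallP /(_ k)]].
by rewrite hk ltnn.
Qed.

Lemma rnk_sigma (i : 'I_n) (k : 'I_t) : rnk sigma i (sigma i k) = k.+1.
Proof.
rewrite /rnk; case: pickP => [k' /eqP /(@tp_inj _ _ _ sigma i) -> //|].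
by move=> /(_ k); rewrite eqxx.
Qed.

Lemma prefers_closer (R : realType) (htm : (t <= m)%N)
    (d : 'I_n + 'I_m -> 'I_n + 'I_m -> R) (i : 'I_n) (Y X : 'I_m) :
  consistent sigma d -> prefers sigma i Y X ->
  d (inl i) (inr Y) <= d (inl i) (inr X).
Proof.
case=> pi [pinj pext pmon] /existsP [k /andP [/eqP hk /forallP hk']].
have /codomP [b hb] := injF_onto (pinj i) X.
have km : (k < m)%N by apply: leq_trans (ltn_ord k) htm.
have -> : Y = pi i (Ordinal km) by rewrite (pext i k) // hk.
rewrite hb; apply: pmon => /=.
case: (ltnP b t) => hbt; last exact: leq_trans (ltn_ord k) hbt.
have := hk' (Ordinal hbt); rewrite -(pext i (Ordinal hbt) b) // -hb eqxx.
by apply.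
Qed.

(* The alternatives preferred to Xh have distinct reported ranks in 1..t, so
   their inverse ranks sum to at most H_t. *)
Lemma sum_inv_rnk_le_harmonic (R : realType) (i : 'I_n) (Xh : 'I_m) :
  \sum_(Z < m | prefers sigma i Z Xh) ((rnk sigma i Z)%:R : R)^-1
    <= harmonic R t.
Proof.
pose F (Z : 'I_m) : R := ((rnk sigma i Z)%:R)^-1.
have F_ge0 (Z : 'I_m) : 0 <= F Z by rewrite invr_ge0.
apply: (@le_trans _ _ (\sum_(Z < m) \sum_(k < t | sigma i k == Z) F Z)).
  rewrite [X in _ <= X](bigID (fun Z => prefers sigma i Z Xh)) /=.
  rewrite -[X in X <= _]addr0; apply: lerD; last first.
    by apply: sumr_ge0 => Z _; apply: sumr_ge0.
  apply: ler_sum => Z /existsP [k /andP [hk _]].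
  by rewrite (bigD1 k) //= lerDl; apply: sumr_ge0.
rewrite (exchange_big_dep xpredT) //= /harmonic; apply: ler_sum => k _.
under eq_bigl do rewrite eq_sym.
by rewrite (big_pred1_eq _ (sigma i k)) /F rnk_sigma.
Qed.

End Ranks.

Lemma harmonic_gt0 (R : realType) (t : nat) : (0 < t)%N -> 0 < harmonic R t.
Proof.
case: t => // t _; rewrite /harmonic big_ord_recl /= invr1.
apply: (@lt_le_trans _ _ 1) => //; rewrite lerDl.
by apply: sumr_ge0 => k _; rewrite invr_ge0.
Qed.

Section AgentBound.
Variables (R : realType) (n m t : nat) (sigma : topt_profile n m t).
Hypotheses (ht : (0 < t)%N) (htm : (t <= m)%N).
Variables (Xh : 'I_m) (i : 'I_n).

Definition switch_prob (Y : 'I_m) : R :=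
  (2 * harmonic R t * (rnk sigma i Y)%:R)^-1.

Definition switch_mass : R := \sum_(Y < m | prefers sigma i Y Xh) switch_prob Y.

Lemma switch_prob_ge0 (Y : 'I_m) : 0 <= switch_prob Y.
Proof.
by rewrite invr_ge0 !mulr_ge0 ?ler0n // ltW // harmonic_gt0.
Qed.

Lemma switch_mass_le_half : switch_mass <= 2^-1.
Proof.
have hH := @harmonic_gt0 R t ht.
rewrite /switch_mass /switch_prob.
under eq_bigr do rewrite invfM.
rewrite -big_distrr /=.
apply: (@le_trans _ _ ((2 * harmonic R t)^-1 * harmonic R t)).
  apply: ler_wpM2l; last exact: sum_inv_rnk_le_harmonic.
  by rewrite invr_ge0 mulr_ge0 // ltW.
by rewrite invfM -mulrA mulVf ?mulr1 // gt_eqF.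
Qed.

Lemma th_prob_expectation (c : 'I_m -> R) :
  \sum_(Y < m) th_prob R sigma Xh i Y * c Y =
    (1 - switch_mass) * c Xh
    + \sum_(Y < m | prefers sigma i Y Xh) switch_prob Y * c Y.
Proof.
rewrite (bigD1 Xh) //= {1}/th_prob eqxx; congr (_ * _ + _).
rewrite big_mkcond [RHS]big_mkcond; apply: eq_bigr => Y _ /=.
rewrite /th_prob; case: eqP => [->|_] /=.
  by rewrite (negbTE (prefers_irrefl sigma i Xh)).
by case: (prefers sigma i Y Xh); rewrite ?mul0r.
Qed.

Lemma agent_expected_SC_le (d : 'I_n + 'I_m -> 'I_n + 'I_m -> R) :
  pseudometric d -> consistent sigma d ->
  \sum_(Y < m) th_prob R sigma Xh i Y * SC d Y
    <= SC d Xh + n%:R * d (inl i) (inr Xh).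
Proof.
move=> hd hcons; rewrite th_prob_expectation.
set S := switch_mass; set P := n%:R * d (inl i) (inr Xh).
have hP : 0 <= P by case: hd => _ dge _ _; rewrite mulr_ge0 ?ler0n.
have hS0 : 0 <= S by apply: sumr_ge0 => Y _; exact: switch_prob_ge0.
have hS : S <= 2^-1 := switch_mass_le_half.
have hsum : \sum_(Y < m | prefers sigma i Y Xh) switch_prob Y * SC d Y
              <= S * (SC d Xh + 2 * P).
  rewrite /S /switch_mass big_distrl /=; apply: ler_sum => Y hY.
  apply: ler_wpM2l; first exact: switch_prob_ge0.
  by apply: SC_le_closer => //; apply: prefers_closer hY.
have := SC_ge0 hd Xh; nra.
Qed.

End AgentBound.

Lemma th_expected_SC_le_twice (R : realType) (n m t : nat)
    (hn : (0 < n)%N) (ht : (0 < t)%N) (htm : (t <= m)%N)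
    (g : topt_profile n m t -> 'I_m) (sigma : topt_profile n m t)
    (d : 'I_n + 'I_m -> 'I_n + 'I_m -> R) :
  pseudometric d -> consistent sigma d ->
  th_expected_SC g sigma d <= 2 * SC d (g sigma).
Proof.
move=> hd hcons; set A := SC d (g sigma).
have hn0 : (0 : R) < n%:R by rewrite ltr0n.
have hsum : \sum_(i < n) \sum_(Y < m) th_prob R sigma (g sigma) i Y * SC d Y
              <= \sum_(i < n) (A + n%:R * d (inl i) (inr (g sigma))).
  by apply: ler_sum => i _; apply: agent_expected_SC_le.
rewrite big_split /= sumr_const card_ord -big_distrr /= -/(SC d _) -/A in hsum.
have -> : 2 * A = n%:R^-1 * (A *+ n + n%:R * A).
  by rewrite -[A *+ n]mulr_natl -mulrDr mulKf ?lt0r_neq0 //; ring.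
by rewrite /th_expected_SC ler_wpM2l // invr_ge0 ltW.
Qed.

Theorem mainTheorem12 (R : realType) (n m t : nat)
  (hn : (0 < n)%N) (ht : (0 < t)%N) (htm : (t <= m)%N)
  (g : topt_profile n m t -> 'I_m)
  (hg : forall (sigma : topt_profile n m t)
          (d : 'I_n + 'I_m -> 'I_n + 'I_m -> R),
          pseudometric d -> consistent sigma d ->
          forall X : 'I_m,
            SC d (g sigma) <= (6 * m%:R / t%:R + 1) * SC d X) :
  forall (sigma : topt_profile n m t)
         (d : 'I_n + 'I_m -> 'I_n + 'I_m -> R),
    pseudometric d -> consistent sigma d ->
    forall X : 'I_m,
      th_expected_SC g sigma d <= (21 * m%:R / t%:R) * SC d X.
Proof.
move=> sigma d hd hcons X.
have hcost := th_expected_SC_le_twice hn ht htm g hd hcons.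
have hg_X := hg sigma d hd hcons X.
have hX := SC_ge0 hd X.
pose r : R := m%:R / t%:R.
have hr : 1 <= r by rewrite /r ler_pdivlMr ?ltr0n // mul1r ler_nat.
have hrX : SC d X <= r * SC d X by rewrite ler_peMl.
rewrite -[21 * _ / _]mulrA -/r -mulrA.
rewrite -[6 * _ / _]mulrA -/r mulrDl mul1r -mulrA in hg_X.
lra.
Qed.
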